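(* Let $\dot G\in\mathcal C_1\cup\mathcal C_4\cup\mathcal C_5$ be a connected, non-complete, $5$-regular and $1$ net-regular SRSG with parameters $(n,5,a,b,c)$. If $(a,b)=(2,1)$, then $\dot G$ is isomorphic to $\dot S^1_{12}$, which has parameters $(12,5,2,1,-2)$.
   Context: A signed graph $\dot G=(G,\sigma)$ is a simple graph $G$ with $\sigma:E(G)\to\{\pm1\}$; adjacency matrix $A_{\dot G}$ has entries $\sigma(v_iv_j)$ for adjacent vertices and $0$ otherwise. Degree and connectedness refer to $G$; net-degree is $d^+(v)-d^-(v)$; $\rho$ net-regular means all net-degrees equal $\rho$. $\dot G$ on $n$ vertices is an SRSG if it is neither homogeneous complete nor edgeless and there are $r\in\mathbb N$, $a,b,c\in\mathbb Z$ with $(A^2_{\dot G})_{ii}=r$, $(A^2_{\dot G})_{ij}=a$ for positive edges, $b$ for negative edges, $c$ for distinct non-adjacent pairs; parameters $(n,r,a,b,c)$. Classes: $\mathcal C_1$: $a=-b$ and (complete, or non-complete with $c\neq0$); $\mathcal C_4$: $a\ne-b$, non-complete, $c=0$; $\mathcal C_5$: $a\neq-b$, non-complete, $c\notin\{0,\frac{a+b}{2}\}$. $\dot S^1_{12}$ has vertex set $\{(s,t):s\in\{1,2,3,4\},t\in\{1,2,3\}\}$, positive edges $(s,t)(s',t)$ for $s\ne s'$, negative edges $(s,t)(s,t')$ for $t\ne t'$, and no other edges. *)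

From mathcomp Require Import all_boot all_order all_algebra.
Set Implicit Arguments. Unset Strict Implicit. Unset Printing Implicit Defensive.
Import Order.TTheory GRing.Theory Num.Theory.
Local Open Scope ring_scope.

(* A signed graph on a finite vertex type V is given by its signed adjacency
   function sg : V -> V -> int, sg u v = sigma(uv) if uv is an edge, 0 otherwise. *)
Definition signed_graph (V : finType) (sg : V -> V -> int) : Prop :=
  (forall u v, sg u v = sg v u) /\ (forall v, sg v v = 0) /\
  (forall u v, sg u v = 0 \/ sg u v = 1 \/ sg u v = -1).

Definition sadj (V : finType) (sg : V -> V -> int) : rel V :=
  fun u v => sg u v != 0.

Definition sdeg (V : finType) (sg : V -> V -> int) (v : V) : nat :=
  #|[set u | sg v u != 0]|.
Definition sdeg_pos (V : finType) (sg : V -> V -> int) (v : V) : nat :=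
  #|[set u | sg v u == 1]|.
Definition sdeg_neg (V : finType) (sg : V -> V -> int) (v : V) : nat :=
  #|[set u | sg v u == -1]|.

Definition sregular (V : finType) (sg : V -> V -> int) (r : nat) : Prop :=
  forall v, sdeg sg v = r.
Definition net_regular (V : finType) (sg : V -> V -> int) (rho : int) : Prop :=
  forall v, (sdeg_pos sg v)%:Z - (sdeg_neg sg v)%:Z = rho.

Definition sconnected (V : finType) (sg : V -> V -> int) : Prop :=
  forall u v, connect (sadj sg) u v.
Definition scomplete (V : finType) (sg : V -> V -> int) : Prop :=
  forall u v, u != v -> sg u v != 0.
Definition homogeneous_complete (V : finType) (sg : V -> V -> int) : Prop :=
  scomplete sg /\ ((forall u v, u != v -> sg u v = 1) \/
                   (forall u v, u != v -> sg u v = -1)).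
Definition sedgeless (V : finType) (sg : V -> V -> int) : Prop :=
  forall u v, sg u v = 0.

Definition A2 (V : finType) (sg : V -> V -> int) (u v : V) : int :=
  \sum_(w : V) sg u w * sg w v.

Definition SRSG (V : finType) (sg : V -> V -> int)
    (n r : nat) (a b c : int) : Prop :=
  #|V| = n /\ ~ homogeneous_complete sg /\ ~ sedgeless sg /\
  (forall v, A2 sg v v = r%:Z) /\
  (forall u v, sg u v = 1 -> A2 sg u v = a) /\
  (forall u v, sg u v = -1 -> A2 sg u v = b) /\
  (forall u v, u != v -> sg u v = 0 -> A2 sg u v = c).

Definition classC1 (V : finType) (sg : V -> V -> int) (a b c : int) : Prop :=
  a = - b /\ (scomplete sg \/ (~ scomplete sg /\ c <> 0)).
Definition classC4 (V : finType) (sg : V -> V -> int) (a b c : int) : Prop :=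
  a <> - b /\ ~ scomplete sg /\ c = 0.
(* c <> (a+b)/2 is written 2c <> a+b (equivalent over the rationals) *)
Definition classC5 (V : finType) (sg : V -> V -> int) (a b c : int) : Prop :=
  a <> - b /\ ~ scomplete sg /\ c <> 0 /\ 2 * c <> a + b.

Definition sg_isomorphic (V W : finType) (sg : V -> V -> int)
    (sh : W -> W -> int) : Prop :=
  exists f : V -> W, bijective f /\ forall u v, sg u v = sh (f u) (f v).

Definition S12V : finType := ('I_4 * 'I_3)%type.
Definition S12 (x y : S12V) : int :=
  if (x.2 == y.2) && (x.1 != y.1) then 1
  else if (x.1 == y.1) && (x.2 != y.2) then -1
  else 0.

From mathcomp Require Import all_boot all_order all_algebra.
From mathcomp Require Import zify ring lra.
Import Order.TTheory GRing.Theory Num.Theory.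
Set Implicit Arguments. Unset Strict Implicit.

(* Every vertex has 3 positive and 2 negative neighbours.  Since A 1 = 1, the
   row sums of A^2 equal 1, which gives c * (n - 6) = -12.  Weight each 2-path
   u v w (w <> u) by +1 if uw is an edge and by -1 otherwise: the weighted sum
   of the signs sg(uv) sg(vw) is a combination of entries of A^2 and, for
   (a, b) = (2, 1), it equals the number of 2-paths.  So every 2-path has sign
   +1 if it closes a triangle and -1 otherwise.  Consequently "equal or joined
   by a positive edge" and "equal or joined by a negative edge" are
   equivalence relations with classes of size 4 and 3 meeting in single
   points; n is a multiple of 12, hence n = 12, and the two class indices
   identify the graph with the 4 x 3 grid S^1_12. *)

Section UniformEquivalence.

Variables (V : finType) (R : rel V).
Hypothesis R_equiv : equivalence_rel R.

Let P := equivalence_partition R [set: V].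
Let R_equiv_in : {in [set: V] & &, equivalence_rel R} := fun x y z _ _ _ => R_equiv x y z.

Lemma equivalence_partition_setT : partition P [set: V].
Proof. exact: equivalence_partitionP. Qed.

Lemma card_uniform_equivalence s :
  (forall x, #|[set y | R x y]| = s) -> #|V| = (#|P| * s)%N.
Proof.
move=> cardR; rewrite -cardsT (card_uniform_partition (n := s) _ equivalence_partition_setT) //.
move=> _ /imsetP[x _ ->]; rewrite -(cardR x); apply: eq_card => y; by rewrite !inE.
Qed.

Lemma equivalence_index k :
  #|P| = k -> exists g : V -> 'I_k, forall x y, (g x == g y) = R x y.
Proof.
move=> cardP; have [coverP trivP _] := and3P equivalence_partition_setT.
have coverx x : x \in cover P by rewrite (eqP coverP).
have inP x : pblock P x \in enum P by rewrite mem_enum pblock_mem.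
have index_lt x : (index (pblock P x) (enum P) < k)%N.
  by rewrite -cardP cardE index_mem.
exists (fun x => Ordinal (index_lt x)) => x y.
rewrite -val_eqE /= (inj_in_eq (index_inj set0 (s := enum P))) ?inP //.
by rewrite eq_pblock ?coverx // pblock_equivalence_partition ?inE.
Qed.

End UniformEquivalence.

Local Open Scope ring_scope.

Lemma sum_indicator (V : finType) (A : {set V}) :
  \sum_w (w \in A)%:R = #|A|%:Z :> int.
Proof.
rewrite (bigID (mem A)) /= [X in _ + X]big1 ?addr0 => [|w /negbTE -> //].
by rewrite (eq_bigr (fun _ => 1)) => [|w ->]; rewrite // sumr_const natz.
Qed.

Section SignedGraph.

Variables (V : finType) (sg : V -> V -> int).
Hypothesis sg_signed : signed_graph sg.

Lemma sg_sym u v : sg u v = sg v u.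
Proof. by case: sg_signed. Qed.

Lemma sg_refl v : sg v v = 0.
Proof. by case: sg_signed => _ []. Qed.

Lemma sgP u v : [\/ sg u v = 0, sg u v = 1 | sg u v = -1].
Proof. by case: sg_signed => _ [_ /(_ u v)] [|[|]] ->; constructor. Qed.

Lemma sdeg_split v : sdeg sg v = (sdeg_pos sg v + sdeg_neg sg v)%N.
Proof.
rewrite /sdeg; have -> : [set w | sg v w != 0] = [set w | sg v w == 1] :|: [set w | sg v w == -1].
  by apply/setP => w; rewrite !inE; case: (sgP v w) => ->.
rewrite cardsU (_ : _ :&: _ = set0) ?cards0 ?subn0 //.
by apply/setP => w; rewrite !inE; case: (sgP v w) => ->.
Qed.

Definition sign_rel (s : int) : rel V := fun x y => (x == y) || (sg x y == s).

Lemma card_sign_class s x :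
  s != 0 -> #|[set y | sign_rel s x y]| = #|[set y | sg x y == s]|.+1.
Proof.
move=> s0; have -> : [set y | sign_rel s x y] = x |: [set y | sg x y == s].
  by apply/setP => y; rewrite !inE /sign_rel eq_sym.
by rewrite cardsU1 inE sg_refl eq_sym (negbTE s0).
Qed.

Definition nonadj u := [set w | (w != u) && ~~ sadj sg u w].

Variables (p q : nat).
Hypothesis deg_pos : forall v, sdeg_pos sg v = p.
Hypothesis deg_neg : forall v, sdeg_neg sg v = q.

Lemma sum_sign (f : int -> int) v :
  f 0 = 0 -> \sum_w f (sg v w) = p%:Z * f 1 + q%:Z * f (-1).
Proof.
move=> f0; set Pos := [set w | sg v w == 1]; set Neg := [set w | sg v w == -1].
rewrite (bigID (mem Pos)) /= [X in _ + X = _](bigID (mem Neg)) /=.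
rewrite [X in _ + (_ + X) = _]big1 ?addr0 => [|w]; last first.
  by rewrite !inE; case: (sgP v w) => ->.
rewrite [X in _ + X = _](eq_bigl (fun w => w \in Neg)) => [|w]; last first.
  by rewrite !inE; case: (sgP v w) => ->.
rewrite (eq_bigr (fun _ => f 1)) => [|w]; last by rewrite inE => /eqP ->.
rewrite [X in _ + X = _](eq_bigr (fun _ => f (-1))) => [|w]; last by rewrite inE => /eqP ->.
rewrite !sumr_const -[_ *+ #|Pos|]mulr_natl -[_ *+ #|Neg|]mulr_natl !natz.
by rewrite -(deg_pos v) -(deg_neg v).
Qed.

Lemma sum_abs_sg v : \sum_w `|sg v w| = (p + q)%:Z.
Proof. by rewrite (sum_sign (f := fun x => `|x|)) ?normr0 // normrN normr1 PoszD; ring. Qed.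

Lemma A2_diag v : A2 sg v v = (p + q)%:Z.
Proof.
rewrite -(sum_abs_sg v); apply: eq_bigr => w _.
by rewrite (sg_sym w); case: (sgP v w) => ->.
Qed.

Lemma A2_rowsum u : \sum_w A2 sg u w = (p%:Z - q%:Z) ^+ 2.
Proof.
have row v : \sum_w sg v w = p%:Z - q%:Z by rewrite (sum_sign (f := id)) // mulr1 mulrN1.
rewrite /A2 exchange_big /= (eq_bigr (fun v => sg u v * (p%:Z - q%:Z))) => [|v _].
  by rewrite -mulr_suml row expr2.
by rewrite -mulr_sumr row.
Qed.

Lemma card_nonadj u : #|nonadj u|%:Z = #|V|%:Z - 1 - (p + q)%:Z.
Proof.
have split w : 1 = (w == u)%:R + `|sg u w| + (w \in nonadj u)%:R :> int.
  rewrite inE /sadj; case: eqP => [->|_]; first by rewrite sg_refl.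
  by case: (sgP u w) => ->.
rewrite -cardsT -[#|[set: V]|%:Z]sum_indicator.
rewrite (eq_bigr (fun w => (w == u)%:R + `|sg u w| + (w \in nonadj u)%:R)) => [|w _].
  rewrite !big_split /= sum_indicator sum_abs_sg (bigD1 u) //= eqxx big1 => [|w /negbTE -> //].
  by rewrite /=; ring.
by rewrite in_setT -split.
Qed.

Variables (a b c : int).
Hypothesis A2_pos : forall u v, sg u v = 1 -> A2 sg u v = a.
Hypothesis A2_neg : forall u v, sg u v = -1 -> A2 sg u v = b.
Hypothesis A2_nonadj : forall u v, u != v -> sg u v = 0 -> A2 sg u v = c.

Definition A2_by_sign (x : int) : int := if x == 1 then a else if x == -1 then b else 0.

Lemma A2_decomp u w : A2 sg u w =
  (w == u)%:R * (p + q)%:Z + A2_by_sign (sg u w) + c * (w \in nonadj u)%:R.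
Proof.
rewrite inE /sadj /A2_by_sign; case: eqP => [->|/eqP wu].
  by rewrite A2_diag sg_refl /=; ring.
case: (sgP u w) => E; rewrite E /=.
- by rewrite A2_nonadj 1?eq_sym //; ring.
- by rewrite A2_pos //; ring.
- by rewrite A2_neg //; ring.
Qed.

Lemma c_card_nonadj u :
  c * #|nonadj u|%:Z = (p%:Z - q%:Z) ^+ 2 - (p + q)%:Z - (p%:Z * a + q%:Z * b).
Proof.
have := A2_rowsum u; rewrite (eq_bigr _ (fun w _ => A2_decomp u w)) !big_split /=.
rewrite -big_distrl /= -mulr_sumr sum_indicator (sum_sign (f := A2_by_sign)) //.
rewrite (bigD1 u) //= eqxx big1 => [|w /negbTE -> //].
by rewrite /A2_by_sign /= => ?; lra.
Qed.

(* The value of p a + q b when a = p - 1 and b = q - 1, as in S^1_12. *)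
Hypothesis clique_params :
  p%:Z * a + q%:Z * b = p%:Z * (p%:Z - 1) + q%:Z * (q%:Z - 1).

Definition adj_sign u w : int := if w == u then 0 else if sadj sg u w then 1 else -1.

Lemma sum_adj_sign_A2 u :
  \sum_w adj_sign u w * A2 sg u w = (p + q)%:Z * ((p + q)%:Z - 1).
Proof.
have E w : adj_sign u w * A2 sg u w = A2_by_sign (sg u w) - c * (w \in nonadj u)%:R.
  rewrite A2_decomp /adj_sign inE /sadj /A2_by_sign.
  case: eqP => [->|_]; first by rewrite sg_refl /=; ring.
  by case: (sgP u w) => ->; rewrite /=; ring.
rewrite (eq_bigr _ (fun w _ => E w)) sumrB (sum_sign (f := A2_by_sign)) //.
rewrite -mulr_sumr sum_indicator c_card_nonadj /A2_by_sign /=.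
by move: clique_params; rewrite PoszD => ?; lra.
Qed.

Lemma sum_two_path_abs u :
  \sum_w \sum_v (w != u)%:R * `|sg u v * sg v w| = (p + q)%:Z * ((p + q)%:Z - 1).
Proof.
rewrite exchange_big /= (eq_bigr (fun v => `|sg u v| * ((p + q)%:Z - `|sg u v|))).
  rewrite (sum_sign (f := fun x => `|x| * ((p + q)%:Z - `|x|))) ?normr0 ?mul0r //.
  by rewrite normrN normr1; ring.
move=> v _; rewrite -(sum_abs_sg v) (bigD1 u) //= [in RHS](bigD1 u) //= eqxx (sg_sym v u).
rewrite mul0r add0r addrAC subrr add0r mulr_sumr; apply: eq_bigr => w /negbTE ->.
by rewrite normrM mul1r.
Qed.

Lemma two_path_sign u v w : w != u -> sadj sg u v -> sadj sg v w ->
  sg u v * sg v w = if sadj sg u w then 1 else -1.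
Proof.
move=> wu uv vw.
pose slack w' v' :=
  (w' != u)%:R * `|sg u v' * sg v' w'| - adj_sign u w' * (sg u v' * sg v' w').
have slack_ge0 w' v' : 0 <= slack w' v'.
  rewrite /slack /adj_sign /sadj; case: eqP => _ /=; first by rewrite !mul0r subr0.
  by case: (sgP u v') => ->; case: (sgP v' w') => ->; case: (sgP u w') => ->.
have slack_sum : \sum_w' \sum_v' slack w' v' = 0.
  rewrite (eq_bigr (fun w' => \sum_v' (w' != u)%:R * `|sg u v' * sg v' w'|
                               - adj_sign u w' * A2 sg u w')) => [|w' _].
    by rewrite sumrB sum_two_path_abs sum_adj_sign_A2 subrr.
  by rewrite sumrB /A2 mulr_sumr.
have row0 := psumr_eq0P (fun w' _ => sumr_ge0 _ (fun v' _ => slack_ge0 w' v')) slack_sum.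
have := psumr_eq0P (fun v' _ => slack_ge0 w v') (row0 w isT) (i := v) isT.
rewrite /slack /adj_sign (negbTE wu) /=.
by move: uv vw; rewrite /sadj; case: (sgP u v) => ->; case: (sgP v w) => ->;
  case: (sgP u w) => ->.
Qed.

Lemma sg_trans x y z :
  sadj sg x y -> sg x y = sg y z -> x != z -> sg x z = sg x y.
Proof.
move=> xy exy xz.
have sq1 : sg x y * sg x y = 1 by move: xy; rewrite /sadj; case: (sgP x y) => ->.
have yz : sadj sg y z by rewrite /sadj -exy.
have zy : z != y by apply: contraTneq yz => ->; rewrite /sadj sg_refl.
have yx : sadj sg y x by rewrite /sadj sg_sym.
have xz_adj : sadj sg x z.
  have := two_path_sign (u := x) (v := y) (w := z); rewrite eq_sym xz -exy sq1.
  by move=> /(_ isT xy yz); case: (sadj sg x z).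
have := two_path_sign zy yx xz_adj; rewrite yz (sg_sym y x) => E.
by rewrite -[sg x z]mul1r -sq1 -mulrA E mulr1.
Qed.

Lemma sign_rel_equiv s : s != 0 -> equivalence_rel (sign_rel s).
Proof.
move=> s0 x y z; split; first by rewrite /sign_rel eqxx.
rewrite /sign_rel; case: (eqVneq x y) => [-> //|xy] /= /eqP exy.
have adj_xy : sadj sg x y by rewrite /sadj exy.
case: (eqVneq x z) => [<-|xz] /=.
  by rewrite eq_sym (negbTE xy) sg_sym exy eqxx.
case: (eqVneq y z) => [<-|yz] /=; first by rewrite exy eqxx.
apply/eqP/eqP => [exz|eyz].
  have yx : sadj sg y x by rewrite /sadj sg_sym.
  by rewrite (sg_trans yx) ?(sg_sym y x) ?exy ?exz.
by rewrite (sg_trans adj_xy) ?exy ?eyz.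
Qed.

Lemma card_pos_partition :
  #|V| = (#|equivalence_partition (sign_rel 1) [set: V]| * p.+1)%N.
Proof.
apply: (card_uniform_equivalence (sign_rel_equiv (s := 1) isT)) => x.
by rewrite card_sign_class // -/(sdeg_pos sg x) deg_pos.
Qed.

Lemma card_neg_partition :
  #|V| = (#|equivalence_partition (sign_rel (-1)) [set: V]| * q.+1)%N.
Proof.
apply: (card_uniform_equivalence (sign_rel_equiv (s := -1) isT)) => x.
by rewrite card_sign_class // -/(sdeg_neg sg x) deg_neg.
Qed.

End SignedGraph.

Definition S12_A2 (x y : S12V) : int :=
  if x == y then 5 else if S12 x y == 1 then 2 else if S12 x y == -1 then 1 else -2.

Lemma S12_A2E x y : A2 S12 x y = S12_A2 x y.
Proof.
apply/eqP; rewrite /A2 -(pair_big xpredT xpredT (fun i j => S12 x (i, j) * S12 (i, j) y)) /=.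
rewrite !big_ord_recr !big_ord0 /=.
case: x => [[[|[|[|[|?]]]] ?] [[|[|[|?]]] ?]] //;
case: y => [[[|[|[|[|?]]]] ?] [[|[|[|?]]] ?]] //; vm_compute; reflexivity.
Qed.

Lemma S12_refl x : S12 x x = 0.
Proof. by rewrite /S12 !eqxx. Qed.

Lemma S12_SRSG : SRSG S12 12 5 2 1 (-2).
Proof.
pose o4 k (h : (k < 4)%N) : 'I_4 := Ordinal h.
pose o3 k (h : (k < 3)%N) : 'I_3 := Ordinal h.
have neq x y : S12 x y != 0 -> x != y by apply: contraNneq => ->; rewrite S12_refl.
split; first by rewrite card_prod !card_ord.
split; first by case=> /(_ (o4 0%N isT, o3 0%N isT) (o4 1%N isT, o3 1%N isT) isT).
split; first by move=> /(_ (o4 0%N isT, o3 0%N isT) (o4 1%N isT, o3 0%N isT)).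
split; first by move=> v; rewrite S12_A2E /S12_A2 eqxx.
split; first by move=> u v E; rewrite S12_A2E /S12_A2 E (negbTE (neq u v _)) ?E.
split; first by move=> u v E; rewrite S12_A2E /S12_A2 E (negbTE (neq u v _)) ?E.
by move=> u v uv E; rewrite S12_A2E /S12_A2 E (negbTE uv).
Qed.

Lemma sg_isomorphic_S12 (V : finType) (sg : V -> V -> int)
    (row : V -> 'I_4) (col : V -> 'I_3) :
  signed_graph sg -> #|V| = 12%N ->
  (forall x y, (row x == row y) = sign_rel sg (-1) x y) ->
  (forall x y, (col x == col y) = sign_rel sg 1 x y) ->
  sg_isomorphic sg S12.
Proof.
move=> sg_signed cardV erow ecol; pose f x : S12V := (row x, col x).
have f_inj : injective f.
  move=> x y [/eqP + /eqP]; rewrite erow ecol /sign_rel.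
  by case: eqP => // _ /= /eqP ->.
exists f; split; first by apply: inj_card_bij f_inj _; rewrite card_prod !card_ord cardV.
move=> x y; rewrite /S12 /= erow ecol /sign_rel.
case: (eqVneq x y) => [->|_] /=; first by rewrite sg_refl.
by case: (sgP sg_signed x y) => ->.
Qed.

Theorem lemma3p5 (V : finType) (sg : V -> V -> int) (n : nat) (a b c : int) :
  signed_graph sg ->
  SRSG sg n 5 a b c ->
  (classC1 sg a b c \/ classC4 sg a b c \/ classC5 sg a b c) ->
  sconnected sg ->
  ~ scomplete sg ->
  sregular sg 5 ->
  net_regular sg 1 ->
  a = 2 -> b = 1 ->
  sg_isomorphic sg S12 /\ SRSG S12 12 5 2 1 (-2).
Proof.
move=> sg_signed [_ [_ [edges [_ [A2p [A2n A2c]]]]]] _ _ _ reg net Ea Eb; subst a b.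
split; last exact: S12_SRSG.
have [pos3 neg2] : (forall v, sdeg_pos sg v = 3%N) /\ (forall v, sdeg_neg sg v = 2%N).
  by split=> v; have := reg v; have := net v; rewrite /sregular (sdeg_split sg_signed v); lia.
have clique : 3%:Z * 2 + 2%:Z * 1 = 3%:Z * (3%:Z - 1) + 2%:Z * (2%:Z - 1) by [].
have x0 : V by case: (pickP (@predT V)) => [x //|none]; case: edges => x; have := none x.
have equiv s := sign_rel_equiv sg_signed pos3 neg2 A2p A2n A2c clique (s := s).
have cols := card_pos_partition sg_signed pos3 neg2 A2p A2n A2c clique.
have rows := card_neg_partition sg_signed pos3 neg2 A2p A2n A2c clique.
have m_def := card_nonadj sg_signed pos3 neg2 x0.
have c_m : c * #|nonadj sg x0|%:Z = -12.
  by rewrite (c_card_nonadj sg_signed pos3 neg2 A2p A2n A2c).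
have N12 : #|V| = 12%N.
  have c_neg : c <= -1 by nia.
  have : (#|nonadj sg x0| <= 12)%N by nia.
  lia.
have [row erow] := equivalence_index (equiv (-1) isT) (k := 4) ltac:(lia).
have [col ecol] := equivalence_index (equiv 1 isT) (k := 3) ltac:(lia).
exact: sg_isomorphic_S12 sg_signed N12 erow ecol.
Qed.
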